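(* Let $a_2,a_3$ be integers with $1<a_2<a_3$ and $A=\{1,a_2,a_3\}$. Then $h_1\le h_0$.
   Context: An integer $x$ has an $h$-representation if $x=c_3a_3+c_2a_2+c_1$ with integers $c_1,c_2,c_3\ge0$ and $c_1+c_2+c_3\le h$. $X(h)$ is one less than the smallest positive integer with no $h$-representation. $h_0$ is the smallest $h$ with $X(h)\ge a_3$, and $h_1$ is the smallest $h$ such that $X(h'+1)=X(h')+a_3$ for all $h'\ge h$. *)

From mathcomp Require Import all_boot.
From mathcomp Require Import zify.
Set Implicit Arguments. Unset Strict Implicit. Unset Printing Implicit Defensive.

(* A = {1, a2, a3}.  x has an h-representation iff
   x = c3*a3 + c2*a2 + c1 with c1,c2,c3 >= 0 and c1+c2+c3 <= h.
   (Each ci <= h necessarily, so quantifying over 'I_h.+1 is exact.) *)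
Definition hrep (a2 a3 h x : nat) : bool :=
  [exists c1 : 'I_h.+1, exists c2 : 'I_h.+1, exists c3 : 'I_h.+1,
     (c1 + c2 + c3 <= h) && (x == c3 * a3 + c2 * a2 + c1)].

Definition no_hrep_pos (a2 a3 h : nat) : pred nat :=
  fun m => (0 < m) && ~~ hrep a2 a3 h m.

Lemma exists_no_hrep_pos a2 a3 h : exists m, no_hrep_pos a2 a3 h m.
Proof.
exists (h * (a3 + a2 + 1)).+1; rewrite /no_hrep_pos /=.
apply/existsP => -[c1 /existsP [c2 /existsP [c3 /andP [Hs /eqP He]]]].
have H1 := ltn_ord c1; have H2 := ltn_ord c2; have H3 := ltn_ord c3.
move: He Hs H1 H2 H3.
move: (nat_of_ord c1) (nat_of_ord c2) (nat_of_ord c3) => x y z.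
nia.
Qed.

Definition X (a2 a3 h : nat) : nat := (ex_minn (exists_no_hrep_pos a2 a3 h)).-1.

Definition is_h0 (a2 a3 h : nat) : Prop :=
  a3 <= X a2 a3 h /\ forall h', a3 <= X a2 a3 h' -> h <= h'.

Definition stable_from (a2 a3 h : nat) : Prop :=
  forall h', h <= h' -> X a2 a3 h'.+1 = X a2 a3 h' + a3.

Definition is_h1 (a2 a3 h : nat) : Prop :=
  stable_from a2 a3 h /\ forall h', stable_from a2 a3 h' -> h <= h'.

From mathcomp Require Import all_boot zify.
From Stdlib Require Import Classical Wf_nat.
Set Implicit Arguments. Unset Strict Implicit. Unset Printing Implicit Defensive.

(* Write a3 = q a2 + r with 0 <= r < a2.  Once q + a2 <= h + 2, every number
   c2 a2 + c1 >= a3 with c1 + c2 <= h + 1 minus a3 is still a sum of at most h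
   elements of A: trade K copies of a3 for E copies of a2, where K/E is a
   Stern-Brocot neighbour of a2/a3 with denominator at most c2 + c1 / a2.
   With this, X(h+1) = X(h) + a3 as soon as X(h) >= a3 - 1.  Conversely
   X(h) >= a3 forces q + a2 <= h + 2, because q a2 - 1 needs q + a2 - 2
   summands.  Hence the recurrence holds from h0 on, i.e. h1 <= h0. *)

Lemma farey_decomp (a b h k h' k' : nat) : h' * k = h * k' + 1 ->
  h * b <= k * a -> a * k' <= h' * b ->
  h * (h' * b - k' * a) + h' * (k * a - h * b) = a.
Proof.
move=> det lo hi.
have [al Eal] : exists al, h' * b = k' * a + al by exists (h' * b - k' * a); lia.
have [be Ebe] : exists be, k * a = h * b + be by exists (k * a - h * b); lia.
rewrite Eal Ebe !addKn.
nia.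
Qed.

Section SternBrocot.

Variables a b : nat.
Hypotheses (a_gt0 : 0 < a) (a_lt_b : a < b).

Definition farey_neighbours (Q h k h' k' : nat) : Prop :=
  [/\ h' * k = h * k' + 1, h * b < k * a, a * k' < h' * b,
      h' <= k' & maxn k k' <= Q].

Lemma stern_brocot_bracket Q : 0 < Q ->
  (exists K E, [/\ 0 < K, E <= Q & K * b = E * a]) \/
  exists h k h' k', farey_neighbours Q h k h' k' /\ Q < k + k'.
Proof.
move=> Q_gt0.
suff descend n h k h' k' : farey_neighbours Q h k h' k' -> Q < k + k' + n ->
  (exists K E, [/\ 0 < K, E <= Q & K * b = E * a]) \/
  exists h k h' k', farey_neighbours Q h k h' k' /\ Q < k + k'.
  by apply: (descend Q 0 1 1 1); [split | ..]; lia.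
elim: n h k h' k' => [|n IHn] h k h' k' [det lo hi hk' kQ] fuel.
  by right; exists h, k, h', k'; split; first split; lia.
have [Qlt|Qge] := ltnP Q (k + k'); first by right; exists h, k, h', k'.
have k_gt0 : 0 < k by case: k det {lo kQ fuel Qge} => [|//]; lia.
have h'_gt0 : 0 < h' by case: h' hi {det hk' fuel} => [|//]; rewrite mul0n.
have hk : h <= k by clear -lo a_lt_b; nia.
case: (ltngtP ((h + h') * b) ((k + k') * a)) => cmp.
- by apply: (IHn (h + h') (k + k') h' k'); [split | ..]; lia.
- by apply: (IHn h k (h + h') (k + k')); [split | ..]; lia.
- by left; exists (h + h'), (k + k'); split; lia.
Qed.

Variable q : nat.
Hypotheses (q_le : q * a <= b) (q_gt : b < q.+1 * a).

Let q_gt0 : 0 < q. Proof. by case: q q_gt => [|//]; rewrite mul1n ltnNge ltnW. Qed.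

Lemma neighbours_cover Q R s h k h' k' : q < Q -> q + a <= Q + R + s + 1 ->
  farey_neighbours Q h k h' k' -> Q < k + k' ->
  h' * b <= R + k' * a \/ 0 < h /\ k * a + h <= s + h * b + k.
Proof.
move=> qQ qaQ [det lo hi _ kQ] Qkk.
have [|alR] := leqP (h' * b) (R + k' * a); first by left.
have h'_gt0 : 0 < h' by case: h' hi {det alR} => [|//]; lia.
have k'_lt : k' < q.+1 * h'.
  by rewrite -(ltn_pmul2l a_gt0); clear -hi q_gt; nia.
have [h0|h_gt0] := posnP h.
  by exfalso; move: det; rewrite h0 mul0n add0n => /eqP; rewrite muln_eq1; lia.
have [|beK] := leqP (k * a + h) (s + h * b + k); first by right.
exfalso.
have k_gt : q * h < k.
  by rewrite -(ltn_pmul2r a_gt0); clear -lo q_le; nia.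
(* Both neighbours miss by too much, yet their gaps recombine to a = h al + h' be. *)
have dec := farey_decomp det (ltnW lo) (ltnW hi).
have al_gt : R < h' * b - k' * a by lia.
have be_gt : s + k < k * a - h * b + h by lia.
move: (h' * b - k' * a) (k * a - h * b) dec al_gt be_gt => al be dec {}alR {}beK.
have qQkk : q + a <= k + k' + R + s by lia.
clear det lo hi kQ qQ qaQ Qkk.
have A : R.+1 * h <= al * h by apply: leq_mul.
have B : ((s + k).+1 - h) * h' <= be * h' by apply: leq_mul; lia.
have qh : q + h <= k by clear -k_gt q_gt0 h_gt0; nia.
have C : q.+1 * (h' - 1) <= (k + 1 - h) * (h' - 1) by apply: leq_mul; lia.
clear -dec A B C qh k'_lt qQkk h_gt0 h'_gt0 alR beK; nia.
Qed.

Lemma exchange_exists Q R s : q < Q -> q + a <= Q + R + s + 1 ->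
  exists K E, [/\ 0 < K, E <= Q, K * b <= R + E * a & E * a + K <= s + K * b + E].
Proof.
move=> qQ qaQ.
have [[K [E [K_gt0 EQ KbEa]]]|[h [k [h' [k' [nb Qkk]]]]]] :=
  stern_brocot_bracket (leq_ltn_trans (leq0n q) qQ).
  have E_gt0 : 0 < E by case: E KbEa {EQ} => [|//]; rewrite mul0n; nia.
  have KE : K < E by rewrite -(ltn_pmul2r (ltn_trans a_gt0 a_lt_b)); nia.
  by exists K, E; split=> //; lia.
have [h'_low|[h_gt0 h_up]] := neighbours_cover qQ qaQ nb Qkk.
  case: nb => _ _ hi hk' kQ.
  have h'_gt0 : 0 < h' by case: h' hi {h'_low hk'} => [|//]; rewrite mul0n.
  by exists h', k'; split=> //; lia.
case: nb => _ lo _ _ kQ.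
by exists h, k; split=> //; lia.
Qed.

End SternBrocot.

Section Representations.

Variables a2 a3 : nat.

Lemma hrepP h x :
  reflect (exists c1 c2 c3, c1 + c2 + c3 <= h /\ x = c3 * a3 + c2 * a2 + c1)
          (hrep a2 a3 h x).
Proof.
apply: (iffP existsP) => [[c1 /existsP [c2 /existsP [c3 /andP [sum_h /eqP ->]]]]|].
  by exists c1, c2, c3.
case=> c1 [c2 [c3 [sum_h ->]]].
have c1h : c1 < h.+1 by lia.
have c2h : c2 < h.+1 by lia.
have c3h : c3 < h.+1 by lia.
by exists (Ordinal c1h); apply/existsP; exists (Ordinal c2h); apply/existsP;
  exists (Ordinal c3h); rewrite /= sum_h eqxx.
Qed.

Lemma hrep_small h m : m <= h -> hrep a2 a3 h m.
Proof. by move=> mh; apply/hrepP; exists m, 0, 0; split; lia. Qed.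

Lemma hrepS h x : hrep a2 a3 h x -> hrep a2 a3 h.+1 x.
Proof. by case/hrepP=> c1 [c2 [c3 [? ->]]]; apply/hrepP; exists c1, c2, c3; split; lia. Qed.

Lemma hrepS_add_a3 h x : hrep a2 a3 h x -> hrep a2 a3 h.+1 (x + a3).
Proof.
case/hrepP=> c1 [c2 [c3 [? ->]]]; apply/hrepP; exists c1, c2, c3.+1.
by rewrite mulSn; split; lia.
Qed.

Lemma hrep_leX h m : m <= X a2 a3 h -> hrep a2 a3 h m.
Proof.
rewrite /X; case: ex_minnP => N _ N_min mN.
have [->|m_gt0] := posnP m; first exact: hrep_small.
case rep_m: (hrep a2 a3 h m) => //.
by have := N_min m; rewrite /no_hrep_pos m_gt0 rep_m => /(_ isT); lia.
Qed.

Lemma nhrep_X_succ h : ~~ hrep a2 a3 h (X a2 a3 h).+1.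
Proof.
by rewrite /X; case: ex_minnP => N /andP [N_gt0 nrep_N] _; rewrite prednK.
Qed.

Lemma leq_X h n : (forall m, m <= n -> hrep a2 a3 h m) -> n <= X a2 a3 h.
Proof.
move=> rep; rewrite leqNgt; apply/negP => Xn.
by have /negP := nhrep_X_succ h; apply; apply: rep.
Qed.

Lemma X_leq h n : ~~ hrep a2 a3 h n.+1 -> X a2 a3 h <= n.
Proof. by apply: contraR; rewrite -ltnNge => nX; apply: hrep_leX. Qed.

(* c2 a2 + c1 stands for any sum of at most h + 1 elements of {1, a2}. *)
Definition a3_removable h := forall c1 c2, c1 + c2 <= h.+1 ->
  a3 <= c2 * a2 + c1 -> hrep a2 a3 h (c2 * a2 + c1 - a3).

Lemma X_succ h : a3 <= (X a2 a3 h).+1 -> a3_removable h ->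
  X a2 a3 h.+1 = X a2 a3 h + a3.
Proof.
move=> a3_X removable; apply/eqP; rewrite eqn_leq; apply/andP; split.
  apply: X_leq; apply: contra (nhrep_X_succ h) => /hrepP [c1 [c2 [c3 [sum_h rep]]]].
  case: c3 rep sum_h => [|c3] rep sum_h.
    have -> : (X a2 a3 h).+1 = c2 * a2 + c1 - a3 by lia.
    by apply: removable; lia.
  by apply/hrepP; exists c1, c2, c3; split; move: rep; rewrite mulSn; lia.
apply: leq_X => m m_le.
have [m_X|X_m] := leqP m (X a2 a3 h); first by apply/hrepS/hrep_leX.
by rewrite -(subnK (_ : a3 <= m)); [apply/hrepS_add_a3/hrep_leX|]; lia.
Qed.

Lemma hrep_exchange h Q R K E : 0 < K -> E <= Q ->
  K * a3 <= R + E * a2 -> E * a2 + K + (Q + R) <= h.+1 + K * a3 + E ->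
  hrep a2 a3 h (Q * a2 + R - a3).
Proof.
case: K => // K _ EQ; rewrite mulSn => KE count; apply/hrepP.
exists (R + E * a2 - (a3 + K * a3)), (Q - E), K; split; first lia.
rewrite mulnBl; have : E * a2 <= Q * a2 by exact: leq_mul.
lia.
Qed.

Hypotheses (a2_gt1 : 1 < a2) (a2_lt_a3 : a2 < a3).

Let a2_gt0 : 0 < a2. Proof. exact: ltnW. Qed.

Lemma hrep_sub_a3 h Q R : R < a2 -> Q + R <= h.+1 -> a3 <= Q * a2 + R ->
  a3 %/ a2 + a2 <= h + 2 -> hrep a2 a3 h (Q * a2 + R - a3).
Proof.
move=> R_lt QR_le a3_le.
have q_le := leq_divM a3 a2; have q_gt := ltn_ceil a3 a2_gt0.
move: (a3 %/ a2) q_le q_gt => q q_le q_gt large.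
have [qQ|Qq] := ltnP q Q.
  have [K [E [K_gt0 EQ KE count]]] := exchange_exists a2_gt0 a2_lt_a3 q_le q_gt
    (R := R) (s := h.+1 - (Q + R)) qQ ltac:(lia).
  by apply: (hrep_exchange K_gt0 EQ KE); lia.
have Q_eq : Q = q by apply/eqP; rewrite eqn_leq Qq -ltnS -(ltn_pmul2r a2_gt0) mulSn; lia.
have q_gt0 : 0 < q by case: q q_gt {q_le large Qq Q_eq} => //; rewrite mul1n; lia.
rewrite Q_eq in a3_le QR_le *.
by apply: (hrep_exchange (K := 1) (E := q)); rewrite ?mul1n; lia.
Qed.

Lemma a3_removable_of_large_h h : a3 %/ a2 + a2 <= h + 2 -> a3_removable h.
Proof.
move=> large c1 c2 sum_h a3_le.
rewrite (divn_eq c1 a2) addnA -mulnDl in a3_le *.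
apply: hrep_sub_a3 => //; first by rewrite ltn_mod.
by have := leq_pmulr (c1 %/ a2) a2_gt0; have := divn_eq c1 a2; lia.
Qed.

Lemma large_h_of_a3_le_X h : a3 <= X a2 a3 h -> a3 %/ a2 + a2 <= h + 2.
Proof.
move=> a3_X; set q := a3 %/ a2.
have q_gt0 : 0 < q by rewrite divn_gt0 // ltnW.
have qa_le : q * a2 <= a3 := leq_divM a3 a2.
have /hrepP [c1 [c2 [c3 [sum_h rep]]]] : hrep a2 a3 h (q * a2).-1.
  by apply: hrep_leX; lia.
case: c3 rep sum_h => [|c3] rep sum_h; last by move: rep; rewrite mulSn; lia.
have c2q : c2 < q by rewrite -(ltn_pmul2r a2_gt0); lia.
have := leq_pmulr (q - c2).-1 a2_gt0.
nia.
Qed.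

Lemma X_succ_of_a3_le_X h : a3 <= X a2 a3 h -> X a2 a3 h.+1 = X a2 a3 h + a3.
Proof.
move=> a3_X; apply: X_succ; first exact: leqW.
exact/a3_removable_of_large_h/large_h_of_a3_le_X.
Qed.

End Representations.

Lemma classical_least (P : nat -> Prop) :
  (exists n, P n) -> exists n, P n /\ forall m, P m -> n <= m.
Proof.
move=> exP; have [n [[Pn n_min] _]] :=
  @dec_inh_nat_subset_has_unique_least_element P (fun n => classic (P n)) exP.
by exists n; split=> // m /n_min /leP.
Qed.

Theorem mainTheorem5 (a2 a3 : nat) :
  1 < a2 -> a2 < a3 ->
  exists h0 h1, is_h0 a2 a3 h0 /\ is_h1 a2 a3 h1 /\ h1 <= h0.
Proof.
move=> a2_gt1 a2_lt_a3.
have [h0 [a3_X h0_min]] : exists h0, is_h0 a2 a3 h0.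
  by apply: classical_least; exists a3; apply: leq_X => m; apply: hrep_small.
have a3_le_X h : h0 <= h -> a3 <= X a2 a3 h.
  elim: h => [|h IHh]; first by rewrite leqn0 => /eqP <-.
  rewrite leq_eqVlt => /predU1P [<- //|/IHh a3_X_h].
  by rewrite X_succ_of_a3_le_X // leq_addl.
have stable_h0 : stable_from a2 a3 h0.
  by move=> h /a3_le_X; apply: X_succ_of_a3_le_X.
have [h1 [stable_h1 h1_min]] := classical_least (ex_intro _ h0 stable_h0).
by exists h0, h1; split=> //; split=> //; apply: h1_min.
Qed.
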